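(* Let $\Sigma$ be a signature and let $t_1=t_2$ be a one-drop equation between $\Sigma$-terms. Let $T$ be a monoidal monad on $\mathbf{Set}$, and let $\mathbf{1}$ denote the unique $\Sigma$-algebra whose carrier is a one-element set $1$. If $\widehat{T}\mathbf{1}\models t_1=t_2$ (i.e. the equation holds in the lifted algebra with carrier $T1$), then $T$ is affine.
   Context: All monads are on $\mathbf{Set}$ with its Cartesian monoidal structure. A monoidal monad is a monad $(T,\eta,\mu)$ together with a natural transformation $\psi_{X,Y}\colon TX\times TY\to T(X\times Y)$ making $T$ a lax monoidal functor with unit map $\psi^0=\eta_1\colon 1\to T1$, such that $\eta$ and $\mu$ are monoidal natural transformations (equivalently, a commutative monad with its canonical double strength). For $n\ge 2$, $\psi^n\colon TX_1\times\dots\times TX_n\to T(X_1\times\dots\times X_n)$ is the $n$-ary map built associatively from $\psi$; $\psi^1=\mathrm{id}$ and $\psi^0=\eta_1$. A signature $\Sigma$ is a set of operation symbols $\sigma$ with arities $\mathrm{ar}(\sigma)\in\mathbb{N}$; a $\Sigma$-algebra $\mathcal{A}$ is a set $A$ with maps $\sigma_{\mathcal A}\colon A^{\mathrm{ar}(\sigma)}\to A$; $\mathcal A\models t_1=t_2$ means both terms evaluate equally under every assignment of variables to elements of $A$. The lifted algebra $\widehat{T}\mathcal{A}$ has carrier $TA$ and operations $\sigma_{\widehat T\mathcal A}=T\sigma_{\mathcal A}\circ\psi^{\mathrm{ar}(\sigma)}\colon (TA)^{\mathrm{ar}(\sigma)}\to TA$. A monoidal monad $T$ is affine if $T1$ is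 terminal (a one-element set); equivalently $\chi_{A,B}\circ\psi_{A,B}=\mathrm{id}_{TA\times TB}$ for all $A,B$, where $\chi_{A,B}=\langle T\pi_1,T\pi_2\rangle\colon T(A\times B)\to TA\times TB$. An equation $t_1=t_2$ is one-drop if some variable occurs exactly once in $t_1$ and does not occur in $t_2$, or exactly once in $t_2$ and not in $t_1$. *)

(* Set is modelled by Rocq's [Type]. *)
From Stdlib Require Import Vectors.Fin Arith.

Set Implicit Arguments.

Record MonoidalMonad : Type := {
  T :> Type -> Type;
  fmap : forall A B : Type, (A -> B) -> T A -> T B;
  fmap_id : forall A (x : T A), fmap (fun a => a) x = x;
  fmap_comp : forall A B C (f : A -> B) (g : B -> C) (x : T A),
      fmap (fun a => g (f a)) x = fmap g (fmap f x);
  eta : forall A : Type, A -> T A;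
  mu : forall A : Type, T (T A) -> T A;
  eta_nat : forall A B (f : A -> B) (a : A), fmap f (eta a) = eta (f a);
  mu_nat : forall A B (f : A -> B) (x : T (T A)),
      fmap f (mu x) = mu (fmap (fmap f) x);
  mu_eta : forall A (x : T A), mu (eta x) = x;
  mu_fmap_eta : forall A (x : T A), mu (fmap (@eta A) x) = x;
  mu_assoc : forall A (x : T (T (T A))), mu (mu x) = mu (fmap (@mu A) x);
  (* lax monoidal structure psi, with unit map psi^0 = eta_1 *)
  psi : forall A B : Type, T A * T B -> T (A * B);
  psi_nat : forall A A' B B' (f : A -> A') (g : B -> B') (a : T A) (b : T B),
      psi (fmap f a, fmap g b) = fmap (fun p => (f (fst p), g (snd p))) (psi (a, b));
  psi_assoc : forall A B C (a : T A) (b : T B) (c : T C),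
      fmap (fun p => (fst (fst p), (snd (fst p), snd p))) (psi (psi (a, b), c))
      = psi (a, psi (b, c));
  psi_unit_l : forall B (b : T B), fmap (@snd unit B) (psi (eta tt, b)) = b;
  psi_unit_r : forall A (a : T A), fmap (@fst A unit) (psi (a, eta tt)) = a;
  eta_monoidal : forall A B (a : A) (b : B), psi (eta a, eta b) = eta (a, b);
  (* mu is a monoidal natural transformation (T∘T carries T psi ∘ psi, T eta_1 ∘ eta_1) *)
  mu_monoidal : forall A B (x : T (T A)) (y : T (T B)),
      mu (fmap (@psi A B) (psi (x, y))) = psi (mu x, mu y);
  mu_monoidal_unit : mu (fmap (@eta unit) (eta tt)) = eta tt
}.

Arguments fmap {_ _ _} _ _.
Arguments eta {_ _} _.
Arguments mu {_ _} _.
Arguments psi {_ _ _} _.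

(** Affine: T 1 is terminal (a one-element set; it is inhabited by eta tt). *)
Definition affine (M : MonoidalMonad) : Prop :=
  forall x y : M unit, x = y.

Fixpoint prodn (X : Type) (n : nat) : Type :=
  match n with
  | 0 => unit
  | 1 => X
  | S ((S _) as m) => (X * prodn X m)%type
  end.

Fixpoint psin (M : MonoidalMonad) (X : Type) (n : nat) : prodn (M X) n -> M (prodn X n) :=
  match n as n0 return prodn (M X) n0 -> M (prodn X n0) with
  | 0 => fun _ => eta tt
  | S m =>
      match m as m0 return (prodn (M X) m0 -> M (prodn X m0)) ->
                           prodn (M X) (S m0) -> M (prodn X (S m0)) with
      | 0 => fun _ x => x
      | S k => fun rec p => psi (fst p, rec (snd p))
      end (psin M X m)
  end.

Record signature : Type := { sym :> Type; ar : sym -> nat }.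

Inductive term (S : signature) : Type :=
| Var : nat -> term S
| Op : forall s : S, (Fin.t (ar S s) -> term S) -> term S.

Record algebra (S : signature) : Type := {
  carrier :> Type;
  ops : forall s : S, prodn carrier (ar S s) -> carrier }.

Fixpoint tup (X : Type) (n : nat) : (Fin.t n -> X) -> prodn X n :=
  match n as n0 return (Fin.t n0 -> X) -> prodn X n0 with
  | 0 => fun _ => tt
  | S m =>
      match m as m0 return (((Fin.t m0 -> X) -> prodn X m0) ->
                            (Fin.t (S m0) -> X) -> prodn X (S m0)) with
      | 0 => fun _ f => f Fin.F1
      | S k => fun rec f => (f Fin.F1, rec (fun i => f (Fin.FS i)))
      end (@tup X m)
  end.

Fixpoint eval (S : signature) (A : algebra S) (rho : nat -> A) (t : term S) : A :=
  match t with
  | Var _ v => rho v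
  | Op s args => ops A s (tup (fun i => eval A rho (args i)))
  end.

Definition models (S : signature) (A : algebra S) (t1 t2 : term S) : Prop :=
  forall rho : nat -> A, eval A rho t1 = eval A rho t2.

Fixpoint fsum (n : nat) : (Fin.t n -> nat) -> nat :=
  match n as n0 return (Fin.t n0 -> nat) -> nat with
  | 0 => fun _ => 0
  | S m => fun f => f Fin.F1 + @fsum m (fun i => f (Fin.FS i))
  end.

Fixpoint occ (S : signature) (v : nat) (t : term S) : nat :=
  match t with
  | Var _ w => if Nat.eqb v w then 1 else 0
  | Op s args => fsum (fun i => occ v (args i))
  end.

Definition one_drop (S : signature) (t1 t2 : term S) : Prop :=
  exists v : nat, (occ v t1 = 1 /\ occ v t2 = 0) \/ (occ v t2 = 1 /\ occ v t1 = 0).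

Definition one_alg (S : signature) : algebra S :=
  {| carrier := unit; ops := fun _ _ => tt |}.

Definition lift_alg (M : MonoidalMonad) (S : signature) (A : algebra S) : algebra S :=
  {| carrier := M (carrier A);
     ops := fun s xs => fmap (ops A s) (psin M (carrier A) (ar S s) xs) |}.

(* Valuate the dropped variable at an arbitrary x : T 1 and every other variable
   at eta tt.  Since eta is monoidal, a term not containing the variable evaluates
   to eta tt; since eta tt is a unit for psi, a term containing it exactly once
   evaluates to x.  The equation therefore forces x = eta tt. *)

From Stdlib Require Import Vectors.Fin Lia FunctionalExtensionality.

Section MonoidalMonadFacts.
Variable M : MonoidalMonad.

Lemma fmap_const_unit (x : M unit) : fmap (fun _ : unit => tt) x = x.
Proof.
  rewrite <- (fmap_id M unit x) at 2. f_equal.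
  apply functional_extensionality. intros []; reflexivity.
Qed.

Lemma fmap_fst_psi_eta A B (a : M A) (b : B) : fmap fst (psi (a, eta b)) = a.
Proof.
  rewrite <- (fmap_id M A a) at 1.
  rewrite <- (eta_nat M (fun _ : unit => b) tt), psi_nat, <- fmap_comp.
  apply psi_unit_r.
Qed.

Lemma fmap_snd_psi_eta A B (a : A) (b : M B) : fmap snd (psi (eta a, b)) = b.
Proof.
  rewrite <- (fmap_id M B b) at 1.
  rewrite <- (eta_nat M (fun _ : unit => a) tt), psi_nat, <- fmap_comp.
  apply psi_unit_l.
Qed.

Lemma psin_eta X n (f : Fin.t n -> M X) (g : Fin.t n -> X) :
  (forall i, f i = eta (g i)) -> psin M X n (tup f) = eta (tup g).
Proof.
  induction n as [|[|k] IH]; intros Hfg.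
  - reflexivity.
  - apply Hfg.
  - change (psi (f Fin.F1, psin M X (S k) (tup (fun i => f (Fin.FS i))))
            = eta (g Fin.F1, tup (fun i => g (Fin.FS i)))).
    rewrite (IH (fun i => f (Fin.FS i)) (fun i => g (Fin.FS i))) by auto.
    rewrite Hfg. apply eta_monoidal.
Qed.

Lemma psin_unit_single n (f : Fin.t n -> M unit) (j : Fin.t n) :
  (forall i, i <> j -> f i = eta tt) ->
  fmap (fun _ => tt) (psin M unit n (tup f)) = f j.
Proof.
  induction n as [|[|k] IH].
  - apply Fin.case0; exact j.
  - intros _. apply Fin.caseS' with (p := j).
    + apply fmap_const_unit.
    + apply Fin.case0.
  - intros Hf.
    change (fmap (fun _ => tt) (psi (f Fin.F1, psin M unit (S k) (tup (fun i => f (Fin.FS i)))))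
            = f j).
    revert Hf. apply Fin.caseS' with (p := j).
    + intros Hf.
      rewrite (psin_eta _ _ (fun i => f (Fin.FS i)) (fun _ => tt))
        by (intros i; apply Hf; discriminate).
      rewrite <- (fmap_const_unit (f Fin.F1)) at 2.
      rewrite <- (fmap_fst_psi_eta _ _ (f Fin.F1) (tup (fun _ : Fin.t (S k) => tt))) at 2.
      rewrite <- fmap_comp. reflexivity.
    + intros p Hf.
      rewrite (Hf Fin.F1) by discriminate.
      rewrite (fmap_comp M (@snd unit _) (fun _ => tt)), fmap_snd_psi_eta.
      apply (IH (fun i => f (Fin.FS i)) p).
      intros i Hi. apply Hf. intros E. apply Hi, Fin.FS_inj, E.
Qed.

End MonoidalMonadFacts.

Lemma fsum_eq0 n (f : Fin.t n -> nat) : fsum f = 0 -> forall i, f i = 0.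
Proof.
  induction n as [|m IH]; intros H i.
  - apply Fin.case0; exact i.
  - simpl in H. apply Fin.caseS' with (p := i).
    + lia.
    + apply (IH (fun i => f (Fin.FS i))). lia.
Qed.

Lemma fsum_eq1 n (f : Fin.t n -> nat) : fsum f = 1 ->
  exists j, f j = 1 /\ forall i, i <> j -> f i = 0.
Proof.
  induction n as [|m IH]; intros H.
  - discriminate.
  - simpl in H. destruct (f Fin.F1) eqn:E.
    + destruct (IH (fun i => f (Fin.FS i))) as [j [Hj Ho]]; [lia|].
      exists (Fin.FS j). split; [exact Hj|].
      intros i. apply Fin.caseS' with (p := i).
      * intros _; exact E.
      * intros p Hp. apply Ho. intros ->. apply Hp; reflexivity.
    + exists Fin.F1. split; [lia|].
      intros i. apply Fin.caseS' with (p := i).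
      * intros C; exfalso; apply C; reflexivity.
      * intros p _. apply (fsum_eq0 _ (fun i => f (Fin.FS i))). lia.
Qed.

Section LiftedOneAlgebra.
Variables (S : signature) (M : MonoidalMonad) (v : nat) (x : M unit).

Definition point_valuation (w : nat) : M unit := if Nat.eqb v w then x else eta tt.

Lemma eval_point_valuation (t : term S) :
  (occ v t = 0 -> eval (lift_alg M (one_alg S)) point_valuation t = eta tt) /\
  (occ v t = 1 -> eval (lift_alg M (one_alg S)) point_valuation t = x).
Proof.
  induction t as [w | s args IH]; simpl.
  - unfold point_valuation. destruct (Nat.eqb v w); split; intros; congruence.
  - split; intros Hocc.
    + rewrite (psin_eta M _ _ _ (fun _ => tt)).
      * apply eta_nat.
      * intros i. apply (IH i), (fsum_eq0 _ _ Hocc).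
    + destruct (fsum_eq1 _ _ Hocc) as [j [Hj Ho]].
      rewrite (psin_unit_single M _ _ j).
      * apply (IH j), Hj.
      * intros i Hi. apply (IH i), Ho, Hi.
Qed.

End LiftedOneAlgebra.

Theorem lemma4 (S : signature) (t1 t2 : term S) (M : MonoidalMonad) :
  one_drop t1 t2 ->
  models (lift_alg M (one_alg S)) t1 t2 ->
  affine M.
Proof.
  intros [v Hv] Hmodels.
  assert (Heta : forall x : M unit, x = eta tt).
  { intros x.
    pose proof (Hmodels (point_valuation M v x)) as Heq.
    destruct (eval_point_valuation S M v x t1) as [Ht1_0 Ht1_1].
    destruct (eval_point_valuation S M v x t2) as [Ht2_0 Ht2_1].
    destruct Hv as [[H1 H2] | [H2 H1]].
    - rewrite <- (Ht1_1 H1), Heq. apply Ht2_0, H2.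
    - rewrite <- (Ht2_1 H2), <- Heq. apply Ht1_0, H1. }
  intros x y. rewrite (Heta x), (Heta y). reflexivity.
Qed.
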